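(* Let $p_i$ and $p_j$ ($i\ne j$) be two input-state walks in the colored union graph $\mathcal G_c$ of a switched system $(A_k,B_k)_{k=1}^N$, and let $\hat p_i,\hat p_j$ be their MDG-paths in the multi-layer dynamic graph $\hat{\mathcal G}_{\bar l}$ with $\bar l\ge\max\{|p_i|,|p_j|\}$. If either $p_i$ and $p_j$ are vertex-disjoint, or $\mathrm{ins}(p_i^c,p_j^c)\neq\emptyset$ and $\mathrm{Pins}(p_i^c\backslash p_j^c)$ and $\mathrm{Pins}(p_j^c\backslash p_i^c)$ have distinct color indices, then $\hat p_i$ and $\hat p_j$ are vertex-disjoint.
   Context: Setting: a switched system with subsystems $(A_k,B_k)$, $A_k\in\mathbb{R}^{n\times n}$, $B_k\in\mathbb{R}^{n\times m_k}$, $k\in[N]=\{1,\dots,N\}$; $A_k(p,j)$, $B_l(q,j)$ denote entries. Colored union graph $\mathcal G_c$: vertices $X=\{x_1,\dots,x_n\}$ and $U=\bigcup_{k}U_k$, $U_k=\{u^k_1,\dots,u^k_{m_k}\}$; for each $k$ and each $A_k(j,q)\ne0$ there is a state edge $(x_q,x_j)$ with color index $k$ (parallel edges of different colors are allowed), and for each $B_k(j,q)\neq 0$ an input edge $(u^k_q,x_j)$ with color index $k$. An input-state walk is a walk with tail in $U$ and head in $X$. The color index of a walk is the sequence of color indices of its edges. The reverse walk $p^c$ of $p=(e_1,\dots,e_k)$ is $(e_k^c,\dots,e_1^c)$ where $e^c$ reverses the direction of $e$ (keeping its color). For walks $p_1=(v_{i_1},\dots,v_{i_k})$ and $p_2=(v_{j_1},\dots,v_{j_{k'}})$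 (as vertex sequences), $\mathrm{ins}(p_1,p_2)=v_{i_{k^*}}$ with $k^*=\min\{q: i_q=j_q\}$ (the first vertex two walkers moving simultaneously along the walks occupy at the same time), and $\mathrm{ins}(p_1,p_2)=\emptyset$ if no such $q$ exists; if $\mathrm{ins}(p_1,p_2)\ne\emptyset$, $\mathrm{Pins}(p_1\backslash p_2)=(v_{i_1},\dots,v_{i_{k^*}})$ and $\mathrm{Pins}(p_2\backslash p_1)=(v_{j_1},\dots,v_{j_{k^*}})$. Multi-layer dynamic graph $\hat{\mathcal G}_{\bar l}$: layers $0,\dots,\bar l$. Layer 0: $\hat X_0=\{x^{00}_{p0}:p\in[n]\}$, $\hat U_0=\{u^{00}_{k,j0}: j\in[N],k\in[m_j]\}$, edges $(u^{00}_{k,j0},x^{00}_{q0})$ when $B_j(q,k)\ne0$. Layer $i\ge1$: $\hat X_i=\{x^{kt}_{ji}: j\in[n],k\in[N],t\in[N^{i-1}]\}$, $\hat U_i=\{u^{kt}_{j,li}: k,l\in[N],j\in[m_l],t\in[N^{i-1}]\}$, edges $(u^{kt}_{j,li},x^{kt}_{qi})$ when $B_l(q,j)\ne0$. Edges $(x^{k1}_{j1},x^{00}_{p0})$ when $A_k(p,j)\ne0$; for $i\ge2$, edges $(x^{kt}_{ji},x^{k't'}_{p,i-1})$ when $A_k(p,j)\ne 0$, for $k,k'\in[N]$, $t'\in[N^{i-2}]$, $t=(k'-1)N^{i-2}+t'$. An edge $(x^{kt}_{ji},\cdot)$ between layers has color index $k$. MDG-path: for an input-state walk $p$ of length $k$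 whose successive edges have colors $i_1,\dots,i_k$ and pass through vertices $u^{i_1}_{j_1},x_{j_2},\dots,x_{j_{k+1}}$, its MDG-path $\hat p$ (in any $\hat{\mathcal G}_{\bar l}$ with $\bar l\ge k$) is the unique path of the form $(u^{i_2,\bullet}_{j_1,i_1,k-1},x^{i_2,\bullet}_{j_2,k-1},x^{i_3,\bullet}_{j_3,k-2},\dots,x^{i_k,1}_{j_k,1},x^{00}_{j_{k+1},0})$, where the copy indices $\bullet$ are those forced by the edge structure (for $k=1$ it is $(u^{00}_{j_1,i_1 0},x^{00}_{j_2,0})$). *)

(* Indices k in [N] are represented by 'I_N
   (0-based); in the MDG superscripts colors are written 1-based (k.+1) so that
   the paper's copy-index encoding t = (k'-1) N^(i-2) + t' is literal. *)
From HB Require Import structures.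
From mathcomp Require Import all_boot all_order all_algebra.
Set Implicit Arguments. Unset Strict Implicit. Unset Printing Implicit Defensive.
Import Order.TTheory GRing.Theory Num.Theory.
Local Open Scope ring_scope.

Section Graphs.
Variables (R : realFieldType) (n N : nat) (m : 'I_N -> nat).
Variables (A : 'I_N -> 'M[R]_n) (B : forall k : 'I_N, 'M[R]_(n, m k)).

(* vertices of the colored union graph G_c: x_j (inl j) or u^k_q (inr (k;q)) *)
Definition cvertex := ('I_n + {k : 'I_N & 'I_(m k)})%type.

Definition cedge := (cvertex * 'I_N * cvertex)%type.
Definition etail (e : cedge) : cvertex := e.1.1.
Definition ecolor (e : cedge) : 'I_N := e.1.2.
Definition ehead (e : cedge) : cvertex := e.2.

Definition in_Gc (e : cedge) : bool :=
  match e with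
  | (inl q, k, inl j) => A k j q != 0
  | (inr u, k, inl j) => (tag u == k) && (B (tag u) j (tagged u) != 0)
  | _ => false
  end.

Definition is_walk (p : seq cedge) : bool :=
  all in_Gc p && sorted (fun e e' => ehead e == etail e') p.

Definition wverts (p : seq cedge) : seq cvertex :=
  match p with [::] => [::] | e :: _ => etail e :: map ehead p end.

Definition wcolors (p : seq cedge) : seq 'I_N := map ecolor p.

Definition is_U (v : cvertex) : bool := if v is inr _ then true else false.
Definition is_X (v : cvertex) : bool := if v is inl _ then true else false.

Definition input_state_walk (p : seq cedge) : bool :=
  match p with
  | [::] => false
  | e :: _ => [&& is_walk p, is_U (etail e) & is_X (ehead (last e p))]
  end.

Definition erev (e : cedge) : cedge := (ehead e, ecolor e, etail e).
Definition rev_walk (p : seq cedge) : seq cedge := rev (map erev p).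

Definition vdisjoint (T : eqType) (s1 s2 : seq T) : bool :=
  ~~ has (fun v => v \in s2) s1.

(* ins: the (0-based) index k*-1 of the first position at which the two
   vertex sequences agree, if any *)
Definition ins_idx (T : eqType) (s1 s2 : seq T) : option nat :=
  let q := find (fun pr => pr.1 == pr.2) (zip s1 s2) in
  if (q < size (zip s1 s2))%N then Some q else None.

Definition ins (T : eqType) (s1 s2 : seq T) : option T :=
  obind (onth s1) (ins_idx s1 s2).

Definition Pins (T : eqType) (s1 s2 : seq T) : seq T :=
  match ins_idx s1 s2 with Some q => take q.+1 s1 | None => [::] end.

(* Pins(p1 \ p2) as a sub-walk of p1 (its first k*-1 edges); its vertex
   sequence is Pins (wverts p1) (wverts p2) (a single vertex when k* = 1) *)
Definition Pins_walk (p1 p2 : seq cedge) : seq cedge :=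
  match ins_idx (wverts p1) (wverts p2) with Some q => take q p1 | None => [::] end.

(* MDG vertices: x^{kt}_{j,i} = inl (i, (k,t), j);
                 u^{kt}_{j,l,i} = inr (i, (k,t), (l;j)) with j in [m_l].
   Layer 0 vertices have superscript (0,0). *)
Definition mvertex :=
  ((nat * (nat * nat) * 'I_n) + (nat * (nat * nat) * {l : 'I_N & 'I_(m l)}))%type.

Definition valid_sup (i : nat) (kt : nat * nat) : bool :=
  if i == 0%N then kt == (0,0)%N
  else [&& 0 < kt.1 <= N & 0 < kt.2 <= N ^ i.-1]%N.

Definition in_MDG (lbar : nat) (v : mvertex) : bool :=
  match v with
  | inl (i, kt, _) => (i <= lbar)%N && valid_sup i kt
  | inr (i, kt, _) => (i <= lbar)%N && valid_sup i kt
  end.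

Definition MDG_edge (lbar : nat) (v w : mvertex) : bool :=
  in_MDG lbar v && in_MDG lbar w &&
  match v, w with
  | inr (i, kt, u), inl (i', kt', q) =>
      [&& i == i', kt == kt' & B (tag u) q (tagged u) != 0]
  | inl (i, (k, t), j), inl (i', (k', t'), p) =>
      [&& i == i'.+1,
          [exists kk : 'I_N, (k == kk.+1) && (A kk p j != 0)] &
          (if i == 1%N then (k', t') == (0, 0)%N
           else t == ((k' - 1) * N ^ (i - 2) + t')%N)]
  | _, _ => false
  end.

(* copy index t encoding the color sequence (1-based colors) *)
Fixpoint code (cs : seq nat) : nat :=
  match cs with
  | [::] => 1%N
  | c :: cs' => ((c - 1) * N ^ size cs' + code cs')%N
  end.

(* superscript (k,t) of a layer-(size cs) vertex whose walk continues with
   edges of colors cs *)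
Definition msup (cs : seq 'I_N) : nat * nat :=
  match cs with
  | [::] => (0, 0)%N
  | c :: cs' => ((c : nat).+1, code (map (fun c : 'I_N => (c : nat).+1) cs'))
  end.

Definition mvert_of (v : cvertex) (cs : seq 'I_N) : mvertex :=
  match v with
  | inl j => inl (size cs, msup cs, j)
  | inr u => inr (size cs, msup cs, u)
  end.

Fixpoint mdg_heads (p : seq cedge) : seq mvertex :=
  match p with
  | [::] => [::]
  | e :: p' => mvert_of (ehead e) (wcolors p') :: mdg_heads p'
  end.

(* MDG-path of a walk p of length K with colors i_1..i_K through
   u^{i_1}_{j_1}, x_{j_2}, ..., x_{j_{K+1}}:
   (u^{i_2,.}_{j_1,i_1,K-1}, x^{i_2,.}_{j_2,K-1}, ..., x^{i_K,1}_{j_K,1}, x^{00}_{j_{K+1},0}) *)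
Definition mdg_path (p : seq cedge) : seq mvertex :=
  match p with
  | [::] => [::]
  | e :: p' => mvert_of (etail e) (wcolors p') :: mdg_heads p
  end.

End Graphs.

(* The vertex of an MDG-path coming from position r of a walk p
   records the vertex of p at that position together with the colors of the
   remaining edges of p (its layer is their number, its superscript their
   base-N code).  A common vertex of two MDG-paths therefore comes from a
   common vertex v of p_i and p_j after which both walks follow the same number
   of edges with the same colors.  This excludes vertex-disjoint walks.  In the
   reverse walks v sits at the same position d, so they first meet at some
   position q <= d, and both Pins are prefixes of length q of the same reversed
   color suffix, hence have equal color indices. *)
From HB Require Import structures.
From mathcomp Require Import all_boot all_order all_algebra.
From mathcomp Require Import zify.
Import Order.TTheory GRing.Theory Num.Theory.
Set Implicit Arguments. Unset Strict Implicit. Unset Printing Implicit Defensive.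

Section CopyIndex.
Variable N : nat.

Notation code1 cs := (code N (map (fun c : 'I_N => (c : nat).+1) cs)).

Lemma code_bounds (cs : seq 'I_N) : 0 < code1 cs <= N ^ size cs.
Proof.
elim: cs => [|c cs /andP[code_gt0 code_le]] //=.
rewrite expnS subn1 size_map /=.
have c_lt := ltn_ord c; have := leq_mul c_lt (leqnn (N ^ size cs)); nia.
Qed.

(* [code1] is 1 + the number with base-N digits c_1, ..., c_l. *)
Lemma code_inj (cs cs' : seq 'I_N) :
  size cs = size cs' -> code1 cs = code1 cs' -> cs = cs'.
Proof.
elim: cs cs' => [|c cs IHcs] [|c' cs'] //= [size_eq].
rewrite !size_map !subn1 /= size_eq => code_eq.
have := code_bounds cs; have := code_bounds cs'; rewrite size_eq.
set x := code1 cs; set x' := code1 cs'; set P := N ^ size cs'.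
move=> /andP[x'_gt0 x'_le] /andP[x_gt0 x_le].
have c_eq : (c : nat) = c'.
  by case: (ltngtP c c') => // c_lt; have := leq_mul c_lt (leqnn P); nia.
have x_eq : x = x' by lia.
by rewrite (IHcs cs' size_eq x_eq); congr cons; apply: val_inj.
Qed.

Lemma msup_inj (cs cs' : seq 'I_N) :
  size cs = size cs' -> msup cs = msup cs' -> cs = cs'.
Proof.
case: cs cs' => [|c cs] [|c' cs'] //= [size_eq] [c_eq code_eq].
by rewrite (code_inj size_eq code_eq); congr cons; apply: val_inj.
Qed.

Lemma mvert_of_inj n (m : 'I_N -> nat) (v v' : cvertex n m) cs cs' :
  mvert_of v cs = mvert_of v' cs' -> v = v' /\ cs = cs'.
Proof.
by case: v v' => [j|u] [j'|u'] //= [size_eq sup_eq ->]; split=> //;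
  apply: msup_inj.
Qed.

End CopyIndex.

Section Sequences.
Variable T : eqType.
Implicit Types s : seq T.

Lemma ins_idxC s1 s2 : ins_idx s1 s2 = ins_idx s2 s1.
Proof.
have find_zipC : find (fun pr => pr.1 == pr.2) (zip s2 s1)
               = find (fun pr => pr.1 == pr.2) (zip s1 s2).
  by elim: s1 s2 => [|a s1 IHs] [|b s2] //=; rewrite IHs eq_sym.
by rewrite /ins_idx find_zipC !size_zip minnC.
Qed.

Lemma ins_idx_leq x0 s1 s2 d :
  d < size s1 -> d < size s2 -> nth x0 s1 d = nth x0 s2 d ->
  exists2 q, q <= d & ins_idx s1 s2 = Some q.
Proof.
move=> d_lt1 d_lt2 nth_eq; set q := find (fun pr => pr.1 == pr.2) (zip s1 s2).
have d_lt : d < size (zip s1 s2) by rewrite size_zip leq_min d_lt1 d_lt2.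
have q_le : q <= d.
  rewrite leqNgt; apply/negP => /(before_find (x0, x0)).
  by rewrite nth_zip_cond d_lt /= nth_eq eqxx.
by exists q; rewrite // /ins_idx (leq_ltn_trans q_le d_lt).
Qed.

Lemma take_rev_drop_eq {C : Type} (c1 c2 : seq C) r1 r2 q :
  drop r1 c1 = drop r2 c2 -> q <= size (drop r1 c1) ->
  take q (rev c1) = take q (rev c2).
Proof.
move=> drop_eq q_le.
rewrite -(cat_take_drop r1 c1) -(cat_take_drop r2 c2) !rev_cat.
by rewrite !takel_cat ?size_rev -?drop_eq // drop_eq.
Qed.

End Sequences.

Section Walks.
Variables (R : realFieldType) (n N : nat) (m : 'I_N -> nat).
Variables (A : 'I_N -> 'M[R]_n) (B : forall k : 'I_N, 'M[R]_(n, m k)).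
Implicit Types (e : cedge n m) (p : seq (cedge n m)).

Local Notation chained := (fun e e' : cedge n m => ehead e == etail e').

Lemma size_wverts e p : size (wverts (e :: p)) = (size p).+2.
Proof. by rewrite /= size_map. Qed.

Lemma size_wcolors p : size (wcolors p) = size p.
Proof. exact: size_map. Qed.

Lemma nth_wverts_succ v0 e p r : r <= size p ->
  nth v0 (wverts (e :: p)) r.+1 = ehead (nth e (e :: p) r).
Proof. by move=> r_le; apply: (nth_map e v0 _ (r_le : r < size (e :: p))). Qed.

Lemma wverts_rcons e p : sorted chained (e :: p) ->
  wverts (e :: p) = rcons (map (@etail n N m) (e :: p)) (ehead (last e p)).
Proof.
elim: p e => [|e' p IHp] e //= /andP[/eqP head_eq chain].
by move: (IHp e' chain) => /= [<-]; rewrite head_eq.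
Qed.

Lemma wverts_rev p : sorted chained p -> wverts (rev_walk p) = rev (wverts p).
Proof.
case: p => [|e p] // /wverts_rcons ->; rewrite rev_rcons /rev_walk.
case/lastP: p => [|p e'] //.
rewrite -rcons_cons !map_rcons !rev_rcons last_rcons /=.
by rewrite -map_cons map_rev -map_comp.
Qed.

Lemma wcolors_rev p : wcolors (rev_walk p) = rev (wcolors p).
Proof. by rewrite /wcolors /rev_walk map_rev -map_comp. Qed.

Lemma wcolors_Pins_walk p1 p2 q :
  ins_idx (wverts p1) (wverts p2) = Some q ->
  wcolors (Pins_walk p1 p2) = take q (wcolors p1).
Proof. by rewrite /Pins_walk => ->; rewrite /wcolors map_take. Qed.

Lemma mem_mdg_heads e0 p x : x \in mdg_heads p ->
  exists2 r, r < size p &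
    x = mvert_of (ehead (nth e0 p r)) (drop r.+1 (wcolors p)).
Proof.
elim: p => [|e p IHp] //=; rewrite in_cons => /orP[/eqP ->|/IHp[r r_lt ->]].
  by exists 0 => //=; rewrite drop0.
by exists r.+1.
Qed.

Lemma mem_mdg_path e p x : x \in mdg_path (e :: p) ->
  exists2 r, r <= (size p).+1 &
    x = mvert_of (nth (etail e) (wverts (e :: p)) r)
                 (drop (maxn r 1) (wcolors (e :: p))).
Proof.
rewrite /mdg_path in_cons => /orP[/eqP ->|/(mem_mdg_heads e)[r r_lt ->]].
  by exists 0 => //=; rewrite drop0.
by exists r.+1; rewrite // nth_wverts_succ.
Qed.

Lemma input_state_walk_sorted p : input_state_walk A B p -> sorted chained p.
Proof. by case: p => // e p /and3P[/andP[]]. Qed.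

Lemma in_Gc_head_X e : in_Gc A B e -> is_X (ehead e).
Proof. by case: e => [[[q|u] k] [j|u']]. Qed.

Lemma in_Gc_tail_tag e u : in_Gc A B e -> etail e = inr u -> tag u = ecolor e.
Proof. by case: e => [[[q|u0] k] [j|u']] //= /andP[/eqP <- _] [<-]. Qed.

Lemma nth_wverts_X e p r : all (in_Gc A B) (e :: p) ->
  0 < r <= (size p).+1 -> is_X (nth (etail e) (wverts (e :: p)) r).
Proof.
case: r => [|r] // /allP edges r_le.
by rewrite nth_wverts_succ // in_Gc_head_X // edges // mem_nth.
Qed.

(* The input vertex u^k heading an MDG-path carries only the colors after the
   first edge, but its own color index k is the color of that edge. *)
Lemma mdg_path_meet p1 p2 x :
  input_state_walk A B p1 -> input_state_walk A B p2 ->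
  x \in mdg_path p1 -> x \in mdg_path p2 ->
  exists v0 r s, [/\ r < size (wverts p1), s < size (wverts p2),
    nth v0 (wverts p1) r = nth v0 (wverts p2) s &
    drop r (wcolors p1) = drop s (wcolors p2)].
Proof.
case: p1 => [|e1 p1] //; case: p2 => [|e2 p2] //.
move=> /and3P[/andP[edges1 _] U1 _] /and3P[/andP[edges2 _] U2 _].
move=> /mem_mdg_path[r r_le ->] /mem_mdg_path[s s_le].
move=> /mvert_of_inj[vert_eq colors_eq].
exists (etail e1), r, s; split; rewrite ?size_wverts ?ltnS //.
  by rewrite vert_eq (set_nth_default (etail e1)) // size_wverts.
case: r r_le vert_eq colors_eq => [|r] r_le; case: s s_le => [|s] s_le //=.
- case tail1: (etail e1) U1 => [//|u] _ tail2.
  rewrite !drop0 => colors_eq; congr cons => //.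
  rewrite -(in_Gc_tail_tag (allP edges1 e1 (mem_head _ _)) tail1).
  by rewrite -(in_Gc_tail_tag (allP edges2 e2 (mem_head _ _)) (esym tail2)).
- move=> tail_eq; have := nth_wverts_X (r := s.+1) edges2 s_le.
  by rewrite /= -tail_eq; case: (etail e1) U1.
- move=> head_eq; have := nth_wverts_X (r := r.+1) edges1 r_le.
  by rewrite /= head_eq; case: (etail e2) U2.
Qed.

(* In the reverse walks the common vertex sits at position
   d = size p1 - r = size p2 - s, so they meet at some q <= d. *)
Lemma Pins_colors_eq p1 p2 v0 r s :
  sorted chained p1 -> sorted chained p2 ->
  r < size (wverts p1) -> s < size (wverts p2) ->
  nth v0 (wverts p1) r = nth v0 (wverts p2) s ->
  drop r (wcolors p1) = drop s (wcolors p2) ->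
  wcolors (Pins_walk (rev_walk p1) (rev_walk p2))
  = wcolors (Pins_walk (rev_walk p2) (rev_walk p1)).
Proof.
case: p1 => [|e1 p1] // chain1; case: p2 => [|e2 p2] // chain2.
rewrite !size_wverts !ltnS => r_le s_le vert_eq colors_eq.
have d_eq : (size p1).+1 - r = (size p2).+1 - s.
  by move/(congr1 size): colors_eq; rewrite !size_drop !size_wcolors.
set d := (size p1).+1 - r in d_eq.
have [q q_le ins_eq] : exists2 q, q <= d &
    ins_idx (wverts (rev_walk (e1 :: p1))) (wverts (rev_walk (e2 :: p2)))
    = Some q.
  have d_le1 : d <= (size p1).+1 by apply: leq_subr.
  have d_le2 : d <= (size p2).+1 by rewrite d_eq leq_subr.
  rewrite !wverts_rev //; apply: (ins_idx_leq (x0 := v0));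
    rewrite ?size_rev ?size_wverts ?ltnS //.
  rewrite !nth_rev ?size_wverts ?ltnS // !subSS {2}d_eq !subKn //.
rewrite (wcolors_Pins_walk ins_eq) (wcolors_Pins_walk (q := q)); last first.
  by rewrite ins_idxC.
rewrite !wcolors_rev; apply: take_rev_drop_eq colors_eq _.
by rewrite size_drop size_wcolors.
Qed.

End Walks.

Theorem lemma3 (R : realFieldType) (n N : nat) (m : 'I_N -> nat)
  (A : 'I_N -> 'M[R]_n) (B : forall k : 'I_N, 'M[R]_(n, m k))
  (pi pj : seq (cedge n m)) (lbar : nat) :
  input_state_walk A B pi ->
  input_state_walk A B pj ->
  (maxn (size pi) (size pj) <= lbar)%N ->
  (vdisjoint (wverts pi) (wverts pj) \/
   (ins (wverts (rev_walk pi)) (wverts (rev_walk pj)) != None /\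
    wcolors (Pins_walk (rev_walk pi) (rev_walk pj))
      != wcolors (Pins_walk (rev_walk pj) (rev_walk pi)))) ->
  vdisjoint (mdg_path pi) (mdg_path pj).
Proof.
move=> walk_i walk_j _ hyp; apply/hasPn => x x_i; apply/negP => x_j.
have [v0 [r [s [r_lt s_lt vert_eq colors_eq]]]] :=
  mdg_path_meet walk_i walk_j x_i x_j.
case: hyp => [/hasPn disjoint | [_ /eqP colors_neq]].
  by move: (disjoint _ (mem_nth v0 r_lt)); rewrite vert_eq mem_nth.
apply: colors_neq; apply: Pins_colors_eq r_lt s_lt vert_eq colors_eq.
- exact: input_state_walk_sorted walk_i.
- exact: input_state_walk_sorted walk_j.
Qed.
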